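(* Let $n,k,d$ be integers with $1\le k\le d<n$, let $\alpha>0$, and let $i$ be an integer with $1\le i\le k$. Then $$C^{\mathrm{exact}}_{n,k,d}\left(\alpha,\frac{(d-k+i)\alpha}{d-k+1}\right)\ \ge\ \frac{n i\alpha}{n-k+i}.$$
   Context: A distributed storage system (DSS) with parameters $(n,k,d)$ stores a file across $n$ nodes, each storing an amount $\alpha$ of information (e.g. $\alpha$ symbols over a finite field, where symbols may be split into arbitrarily many sub-symbols), such that the file can be reconstructed from the contents of any $k$ nodes, and any lost node can be repaired by contacting any $d$ of the remaining nodes, each of which transmits an amount $\beta$ to the replacement node, for a total repair bandwidth $\gamma=d\beta$. Repair is exact: the replacement node stores exactly the same content as the lost node. $C^{\mathrm{exact}}_{n,k,d}(\alpha,\gamma)$ denotes the maximum size of a file that can be stored by such an exact-repair DSS with $n$ nodes, node size $\alpha$ and total repair bandwidth $\gamma$. *)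

From HB Require Import structures.
From mathcomp Require Import all_boot all_order all_algebra.
From mathcomp Require Import all_classical all_reals all_analysis.
Set Implicit Arguments. Unset Strict Implicit. Unset Printing Implicit Defensive.
Import Order.TTheory GRing.Theory Num.Theory.
Local Open Scope ring_scope.

(* An exact-repair DSS with n nodes: the file is an element of 'I_m,
   node j stores stor j x : 'I_S (storage alphabet of size S).
   - reconstruction: the contents of any k nodes determine the file;
   - exact repair: for any lost node j and any set H of d other nodes,
     there are helper maps (each helper h sends a symbol of 'I_T computed
     from its own content only; the maps may depend on j and H) such that
     the d transmitted symbols determine the content of node j exactly. *)
Definition is_exact_DSS (n k d m S T : nat) (stor : 'I_n -> 'I_m -> 'I_S) : Prop :=
  (forall K : {set 'I_n}, #|K| = k ->
     forall x y : 'I_m, (forall j, j \in K -> stor j x = stor j y) -> x = y) /\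
  (forall (j : 'I_n) (H : {set 'I_n}), #|H| = d -> j \notin H ->
     exists helper : 'I_n -> 'I_S -> 'I_T,
       forall x y : 'I_m,
         (forall h, h \in H -> helper h (stor h x) = helper h (stor h y)) ->
         stor j x = stor j y).

(* Information amounts are measured as ln(alphabet size) / u, where u > 0
   is an arbitrary unit (symbol size times number of sub-symbols);
   node size alpha means ln S <= alpha * u, total repair bandwidth gamma
   = d * beta means d * ln T <= gamma * u; the file size is ln m / u. *)
Definition exact_file_sizes {R : realType} (n k d : nat) (alpha gamma : R)
  : set (\bar R) :=
  [set z | exists (m S T : nat) (u : R) (stor : 'I_n -> 'I_m -> 'I_S),
      0 < u /\ is_exact_DSS k d T stor /\
      ln (S%:R : R) <= alpha * u /\ d%:R * ln (T%:R : R) <= gamma * u /\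
      z = (ln (m%:R : R) / u)%:E].

Definition C_exact {R : realType} (n k d : nat) (alpha gamma : R) : \bar R :=
  ereal_sup (exact_file_sizes n k d alpha gamma).

(* For every set A of w = n - k + i nodes there are layers carrying an MDS code of length w
   and dimension i over F_p, written as n - k Vandermonde parity checks.  Any k nodes miss
   at most n - k symbols of a layer, so they recover the file.  Layers also carry a tag for
   every node and a priority order on the nodes, in all possible ways.  To repair node j,
   the first d - k + i helpers of a layer (in its priority order) send the sum of their
   symbols over the s = d - k + 1 retaggings of j; together with the s wanted symbols of j
   this leaves n - k unknowns in n - k checks.  Transpositions of helpers show that all d
   helpers carry the same share of this load, so the total repair bandwidth is
   (d - k + i) alpha / (d - k + 1).  With a symbols per node and L layers, n a = w L and
   the code has dimension n a - (n - k) L = n i a / w: file size n i alpha / (n - k + i). *)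
From HB Require Import structures.
From mathcomp Require Import all_boot all_order all_algebra.
From mathcomp Require Import all_classical all_reals all_analysis.
Import Order.TTheory GRing.Theory Num.Theory.
Local Open Scope ring_scope.
From mathcomp Require Import all_fingroup zify ring.
Set Implicit Arguments. Unset Strict Implicit. Unset Printing Implicit Defensive.

Section FiniteCounting.
Local Open Scope nat_scope.

Lemma card_rank_lt (T : finType) (f : T -> nat) (m : nat) (X : {set T}) :
  injective f ->
  #|[set x in X | #|[set y in X | f y < f x]| < m]| = minn m #|X|.
Proof.
move=> f_inj; move: {2}#|X| (erefl #|X|) => N; elim: N X => [|N IH] X cardX.
  move/eqP: cardX; rewrite cards_eq0 => /eqP ->.
  by rewrite cards0 minn0; apply/eqP; rewrite cards_eq0; apply/eqP/finset.setP => x; rewrite !inE.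
have [x1 x1X] : exists x1, x1 \in X by apply/set0Pn; rewrite -card_gt0 cardX.
have [x0 x0X x0_max] := @arg_maxnP _ x1 (mem X) f x1X; move: x0X => /= x0X.
pose X' := X :\ x0.
have cardX' : #|X'| = N by move: cardX; rewrite (cardsD1 x0) x0X => -[].
have below_x0 y : y \in X' -> f y < f x0.
  rewrite !inE => /andP [y_x0 yX]; rewrite ltn_neqAle andbC.
  apply/andP; split; first exact: x0_max.
  by apply: contra y_x0 => /eqP /f_inj ->.
have rank_X' x : x \in X' -> [set y in X | f y < f x] = [set y in X' | f y < f x].
  move=> xX'; apply/finset.setP => y; rewrite !inE.
  by case: (y =P x0) => [-> | //]; rewrite /= x0X ltnNge ltnW // below_x0.
have rank_x0 : [set y in X | f y < f x0] = X'.
  apply/finset.setP => y; rewrite !inE; case: (y =P x0) => [-> | y_x0] /=.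
    by rewrite ltnn andbF.
  by case yX: (y \in X) => //=; apply: below_x0; rewrite !inE yX andbT; apply/eqP.
pose top := if N < m then [set x0] else finset.set0.
have -> : [set x in X | #|[set y in X | f y < f x]| < m] =
    [set x in X' | #|[set y in X' | f y < f x]| < m] :|: top.
  apply/finset.setP => x; rewrite !inE /top.
  case: (x =P x0) => [-> | x_x0].
    by rewrite x0X rank_x0 cardX' /=; case: (N < m); rewrite ?inE ?eqxx.
  have /negbTE x_x0' : x != x0 by apply/eqP.
  case xX: (x \in X) => /=; last by case: (N < m); rewrite ?inE ?x_x0'.
  rewrite rank_X'; last by rewrite !inE xX andbT x_x0'.
  by case: (N < m); rewrite ?inE ?x_x0' ?orbF.
have disjoint_top : [set x in X' | #|[set y in X' | f y < f x]| < m] :&: top = finset.set0.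
  rewrite /top; case: (N < m); last by rewrite finset.setI0.
  by apply/finset.setP => x; rewrite !inE; case: (x =P x0) => [-> |]; rewrite ?andbF ?andbT.
rewrite cardsU disjoint_top cards0 subn0 IH // cardX' /top.
by case: ltnP => ?; rewrite ?cards1 ?cards0; lia.
Qed.

Lemma exists_big_fiber (A B : finType) (f : A -> B) :
  B -> exists b, #|A| <= #|B| * #|[set x | f x == b]|.
Proof.
move=> b0.
have -> : #|A| = \sum_(b : B) #|[set x | f x == b]|.
  rewrite -sum1_card (partition_big f xpredT) //=.
  by apply: eq_bigr => b _; rewrite -sum1_card; apply: eq_bigl => x; rewrite inE.
have [b max_b] : {b : B | \max_(b' : B) #|[set x | f x == b']| = #|[set x | f x == b]|}.
  by apply: bigop.eq_bigmax; apply/card_gt0P; exists b0.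
exists b; rewrite -max_b -sum_nat_const.
by apply: leq_sum => b' _; apply: leq_bigmax.
Qed.

Lemma card_set_inj (T : finType) (g : T -> T) (P Q : pred T) :
  injective g -> (forall x, P (g x) = Q x) -> #|[set x | P x]| = #|[set x | Q x]|.
Proof.
move=> g_inj PgQ.
have -> : [set x | Q x] = g @^-1: [set x | P x] by apply/finset.setP => x; rewrite !inE PgQ.
by rewrite card_preimset.
Qed.

Lemma card_setE (T : finType) (P : pred T) : #|[set x | P x]| = \sum_x P x.
Proof. by rewrite -sum1dep_card big_mkcond; apply: eq_bigr => x _; case: (P x). Qed.

End FiniteCounting.

(* Pair the relations with the coefficients of the polynomial vanishing at every point
   but [mu e]. *)
Lemma vandermonde_sum_eq0 (F : fieldType) (I : finType) (P : pred I) (mu x : I -> F) (r : nat) :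
  {in P &, injective mu} -> (#|P| <= r)%N ->
  (forall t, (t < r)%N -> \sum_(e | P e) mu e ^+ t * x e = 0) ->
  {in P, forall e, x e = 0}.
Proof.
move=> mu_inj card_P sums0 e0 Pe0.
pose q := \prod_(c <- [seq mu e | e <- enum [predD1 P & e0]]) ('X - c%:P).
have size_q : (size q <= r)%N.
  by rewrite size_prod_XsubC size_map -cardE; move: card_P; rewrite (cardD1 e0) Pe0.
have q_sum : \sum_(e | P e) x e * q.[mu e] = 0.
  transitivity (\sum_(e | P e) \sum_(t < r) q`_t * (mu e ^+ t * x e)).
    apply: eq_bigr => e _; rewrite (horner_coef_wide _ size_q) mulr_sumr.
    by apply: eq_bigr => t _; rewrite mulrC -mulrA.
  by rewrite exchange_big big1 // => t _; rewrite -mulr_sumr sums0 // mulr0.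
have q_root e : P e -> e != e0 -> q.[mu e] = 0.
  move=> Pe e_e0; apply/eqP; rewrite -/(root q _) root_prod_XsubC.
  by apply/mapP; exists e; rewrite // mem_enum !inE e_e0.
rewrite (bigD1 e0) //= big1 ?addr0 in q_sum; last first.
  by move=> e /andP [Pe e_e0]; rewrite q_root ?mulr0.
move/eqP: q_sum; rewrite mulf_eq0 horner_prod prodf_seq_eq0 => /orP [/eqP // |].
case/hasP => c /mapP [e]; rewrite mem_enum !inE => /andP [e_e0 Pe] ->.
by rewrite hornerXsubC subr_eq0 => /eqP /mu_inj eq_e; rewrite eq_e ?eqxx in e_e0.
Qed.

Section LayeredCode.
Variables (n k d i p : nat) (o0 : 'I_n).
Hypotheses (k_gt0 : (0 < k)%N) (k_le_d : (k <= d)%N) (d_lt_n : (d < n)%N)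
  (i_gt0 : (0 < i)%N) (i_le_k : (i <= k)%N) (p_prime : prime p).
Local Notation s := (d - k)%N.+1.
Local Notation w := (n - k + i)%N.
Local Notation r := (n - k)%N.
Local Notation dh := (d - k + i)%N.
Hypothesis ns_lt_p : (n * s < p)%N.
Local Notation F := 'F_p.

Definition Layer := ({set 'I_n} * {ffun 'I_n -> 'I_s} * {perm 'I_n})%type.
Definition nodes (x : Layer) := x.1.1.
Definition tag (x : Layer) := x.1.2.
Definition prio (x : Layer) := x.2.
Definition stores (j : 'I_n) (x : Layer) := (j \in nodes x) && (#|nodes x| == w).

Definition evalpt (j : 'I_n) (u : 'I_s) : F := (j * s + u)%:R.

Lemma evalpt_inj j u j' u' : evalpt j u = evalpt j' u' -> j = j' /\ u = u'.
Proof.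
have small (l : 'I_n) (v : 'I_s) : (l * s + v < p)%N.
  apply: leq_trans ns_lt_p; have := ltn_ord l; have := ltn_ord v; nia.
move/(congr1 val); rewrite /= !val_Fp_nat // !modn_small ?small // => eq_val.
move: (congr1 (divn^~ s) eq_val) (congr1 (modn^~ s) eq_val).
rewrite /= !divnMDl // !modnMDl !divn_small ?modn_small // !addn0 => eq_j eq_u.
by split; apply: val_inj.
Qed.

Definition parity (z : 'I_n * Layer -> F) (x : Layer) (t : nat) : F :=
  \sum_(j in nodes x) evalpt j (tag x j) ^+ t * z (j, x).

Definition codeword (z : 'I_n * Layer -> F) :=
  (forall j x, ~~ stores j x -> z (j, x) = 0) /\
  (forall x t, #|nodes x| = w -> (t < r)%N -> parity z x t = 0).

Lemma codeword_eq0_of_k_nodes z (K : {set 'I_n}) : codeword z -> #|K| = k ->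
  (forall j x, j \in K -> z (j, x) = 0) -> forall j x, z (j, x) = 0.
Proof.
move=> [z_off z_par] cardK zK j x.
have [/andP [jA /eqP cardA] | /z_off //] := boolP (stores j x).
have [jK | jNK] := boolP (j \in K); first exact: zK.
pose P := [pred l | (l \in nodes x) && (l \notin K)].
apply: (@vandermonde_sum_eq0 _ _ P (fun l => evalpt l (tag x l)) (fun l => z (l, x)) r);
  last by rewrite inE jA jNK.
- by move=> l l' _ _ /evalpt_inj [].
- apply: leq_trans (_ : #|~: K| <= r)%N.
    by apply: subset_leq_card; apply/fintype.subsetP => l; rewrite !inE => /andP [].
  by rewrite cardsCs finset.setCK card_ord cardK.
- move=> t lt_t; transitivity (parity z x t); last exact: z_par.
  rewrite /parity [RHS](bigID (fun l => l \in K)) /= [X in _ = X + _]big1 ?add0r //.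
  by move=> l /andP [_ lK]; rewrite zK // mulr0.
Qed.

Definition retag (x : Layer) (j : 'I_n) (u : 'I_s) : Layer :=
  ((nodes x, [ffun l => if l == j then u else tag x l]), prio x).

Lemma tag_retag x j u l : tag (retag x j u) l = if l == j then u else tag x l.
Proof. by rewrite /tag ffunE. Qed.

Lemma retag_retag x j u v : retag (retag x j u) j v = retag x j v.
Proof. by congr (_, _, _); apply/ffunP => l; rewrite !ffunE; case: eqP. Qed.

Lemma retag_tag x j : retag x j (tag x j) = x.
Proof.
case: x => [[A a] o]; congr (_, _, _).
by apply/ffunP => l; rewrite ffunE; case: eqP => [->|].
Qed.

Lemma sum_parity_retag z x j t : j \in nodes x ->
  \sum_(u : 'I_s) parity z (retag x j u) t =
  \sum_(u : 'I_s) evalpt j u ^+ t * z (j, retag x j u) +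
  \sum_(l in nodes x | l != j) evalpt l (tag x l) ^+ t * \sum_(u : 'I_s) z (l, retag x j u).
Proof.
move=> jA; rewrite /parity.
under eq_bigr => u _ do rewrite (bigD1 j jA) /= tag_retag eqxx.
rewrite big_split /= exchange_big /=; congr (_ + _).
apply: eq_bigr => l /andP [_ /negbTE l_j]; rewrite mulr_sumr.
by apply: eq_bigr => u _; rewrite tag_retag l_j.
Qed.

Definition helpers (H : {set 'I_n}) (x : Layer) : {set 'I_n} :=
  [set h in nodes x :&: H | (#|[set l in nodes x :&: H | prio x l < prio x h]| < dh)%N].

Definition serves (j : 'I_n) (H : {set 'I_n}) (h : 'I_n) (x : Layer) :=
  [&& stores j x, tag x j == ord0 & h \in helpers H x].

Lemma helpers_sub (H : {set 'I_n}) x : helpers H x \subset nodes x :&: H.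
Proof. by apply/fintype.subsetP => l; rewrite inE => /andP []. Qed.

Lemma card_helpers (H : {set 'I_n}) x : #|helpers H x| = minn dh #|nodes x :&: H|.
Proof.
by apply: (@card_rank_lt _ (fun l => nat_of_ord (prio x l))) => l l' /val_inj /perm_inj.
Qed.

Lemma card_helpers_full (H : {set 'I_n}) x : #|nodes x| = w -> #|H| = d -> #|helpers H x| = dh.
Proof.
move=> cardA cardH; rewrite card_helpers; apply/minn_idPl.
have : (#|nodes x :\: H| <= n - d)%N.
  have <- : #|~: H| = (n - d)%N by rewrite cardsCs finset.setCK card_ord cardH.
  by apply: subset_leq_card; apply/fintype.subsetP => l; rewrite !inE => /andP [].
by have := cardsID H (nodes x); rewrite cardA; lia.
Qed.

(* The unknowns are the s symbols of [j] in the retagged layers together with one sum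
   per non-helper node of the layer: [s + (w - 1 - dh) = n - k] of them. *)
Lemma repair_codeword z j (H : {set 'I_n}) : codeword z -> #|H| = d -> j \notin H ->
  (forall h x, serves j H h x -> \sum_(u : 'I_s) z (h, retag x j u) = 0) ->
  forall x, z (j, x) = 0.
Proof.
move=> [z_off z_par] cardH jNH helped x.
have [/andP [jA /eqP cardA] | /z_off //] := boolP (stores j x).
pose x0 := retag x j ord0; pose hs := helpers H x0.
have j_x0 : j \in nodes x0 by [].
have serves_x0 h : h \in hs -> serves j H h x0.
  by move=> h_hs; rewrite /serves /stores j_x0 cardA eqxx tag_retag eqxx.
have hs_sub : hs \subset nodes x0 :\ j.
  apply/fintype.subsetP => l /(fintype.subsetP (helpers_sub H x0)).
  by rewrite !inE => /andP [-> lH]; rewrite andbT; apply: contraNneq jNH => <-.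
have card_hs : #|hs| = dh by apply: card_helpers_full.
clearbody hs.
pose S := nodes x0 :\ j :\: hs.
have S_j : j \notin S by rewrite !inE eqxx andbF.
pose P := [pred e : 'I_s + 'I_n | if e is inr l then l \in S else true].
pose mu e := match e with inl u => evalpt j u | inr l => evalpt l (tag x0 l) end.
pose X e := match e with
  | inl u => z (j, retag x0 j u) | inr l => \sum_(u : 'I_s) z (l, retag x0 j u) end.
suff X0 : forall u, X (inl u) = 0.
  by rewrite -[x](retag_tag x j) -(retag_retag x j ord0); apply: X0.
move=> u; apply: (@vandermonde_sum_eq0 _ _ P mu X r) => //.
- move=> [v|l] [v'|l'] Pe Pe' /evalpt_inj [eq_node eq_tag].
  + by rewrite eq_tag.
  + by move: Pe'; rewrite -eq_node inE /= (negbTE S_j).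
  + by move: Pe; rewrite eq_node inE /= (negbTE S_j).
  + by rewrite eq_node.
- have -> : #|P| = (s + #|S|)%N.
    rewrite -[#|P|]sum1_card big_sumType /= sum1_card card_ord sum1dep_card.
    by congr (_ + _)%N; apply: eq_card => l; rewrite inE.
  rewrite cardsD (finset.setIidPr hs_sub) card_hs.
  by have := cardsD1 j (nodes x0); rewrite j_x0 cardA; lia.
- move=> t lt_t; have := sum_parity_retag z t j_x0.
  rewrite big1 => [|v _]; last exact: z_par.
  rewrite (bigID (fun l => l \in hs)) /= [X in _ + (X + _)]big1 ?add0r;
    last by move=> l /andP [_ l_hs]; rewrite helped ?mulr0 // serves_x0.
  move=> sum0.
  rewrite big_sumType /= [RHS]sum0; congr (_ + _); apply: eq_bigl => l; rewrite !inE.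
  by case: (l \in hs); case: (l != j); rewrite ?andbF ?andbT.
Qed.

Definition transpose_nodes (h h' : 'I_n) (x : Layer) : Layer :=
  ((tperm h h' @^-1: nodes x, tag x), (tperm h h' * prio x)%g).

Lemma transpose_nodesK h h' : involutive (transpose_nodes h h').
Proof.
case=> [[A a] o]; congr (_, _, _); last by apply/permP => l; rewrite !permM tpermK.
by apply/finset.setP => l; rewrite !inE tpermK.
Qed.

Lemma stores_transpose h h' j x :
  stores (tperm h h' j) (transpose_nodes h h' x) = stores j x.
Proof. by rewrite /stores /= inE tpermK card_preimset //; apply: perm_inj. Qed.

Lemma helpers_transpose (H : {set 'I_n}) h h' x l : h \in H -> h' \in H ->
  (tperm h h' l \in helpers H (transpose_nodes h h' x)) = (l \in helpers H x).
Proof.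
move=> hH h'H; have tH y : (tperm h h' y \in H) = (y \in H).
  by case: tpermP => [->|->|//]; rewrite ?hH ?h'H.
rewrite !inE /= tpermK tH permM tpermK; congr (_ && (_ < _)%N).
apply: (@card_set_inj _ (tperm h h')); first exact: perm_inj.
by move=> y; rewrite !inE /= tpermK tH permM tpermK.
Qed.

Lemma stores_transpose0 j t : stores j (transpose_nodes o0 j t) = stores o0 t.
Proof. by rewrite -(stores_transpose o0 j o0) tpermL. Qed.

Definition Slot := {x : Layer | stores o0 x}.
Definition nslots := #|{: Slot}|.
Definition nlayers := #|[set x : Layer | #|nodes x| == w]|.

Lemma card_stores j : #|[set x | stores j x]| = nslots.
Proof.
transitivity #|[set x | stores o0 x]|.
  apply: (@card_set_inj _ (transpose_nodes o0 j)); first exact: inv_inj (transpose_nodesK o0 j).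
  by move=> x; rewrite stores_transpose0.
by rewrite /nslots card_sig; apply: eq_card => x; rewrite !inE.
Qed.

Lemma card_stores_pairs : #|[set y : 'I_n * Layer | stores y.1 y.2]| = (n * nslots)%N.
Proof.
rewrite card_setE -(pair_big xpredT xpredT (fun j x => (stores j x : nat))) /=.
under eq_bigr => j _ do rewrite -card_setE card_stores.
by rewrite sum_nat_const card_ord.
Qed.

Lemma nslots_balance : (n * nslots = w * nlayers)%N.
Proof.
rewrite -card_stores_pairs card_setE -(pair_big xpredT xpredT (fun j x => (stores j x : nat))).
rewrite exchange_big /= /nlayers card_setE big_distrr /=; apply: eq_bigr => x _.
rewrite /stores; have [/eqP <- | _] := boolP (#|nodes x| == w); last first.
  by rewrite muln0 big1 // => j _; rewrite andbF.
under eq_bigr => j _ do rewrite andbT.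
by rewrite muln1 -card_setE; apply: eq_card => j; rewrite !inE.
Qed.

Lemma card_tag0 j : (s * #|[set x | stores j x && (tag x j == ord0)]|)%N = nslots.
Proof.
pose swap u x := retag x j (tperm u ord0 (tag x j)).
have swapK u : involutive (swap u).
  by move=> x; rewrite /swap retag_retag tag_retag eqxx tpermK retag_tag.
have card_tag u : #|[set x | stores j x && (tag x j == ord0)]| =
                  #|[set x | stores j x && (tag x j == u)]|.
  apply: (card_set_inj (inv_inj (swapK u))) => x.
  rewrite /swap /stores tag_retag eqxx (can2_eq (tpermK u ord0) (tpermK u ord0)) tpermR.
  by rewrite eq_sym.
rewrite -(card_stores j) -{1}(card_ord s) -sum_nat_const.
under eq_bigr => u _ do rewrite (card_tag u) card_setE.
rewrite exchange_big card_setE; apply: eq_bigr => x _ /=.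
rewrite (bigD1 (tag x j)) //= eqxx andbT big1 ?addn0 // => u /negbTE u_tag.
by rewrite eq_sym u_tag andbF.
Qed.

Lemma card_serves_eq j (H : {set 'I_n}) h h' : j \notin H -> h \in H -> h' \in H ->
  #|[set x | serves j H h' x]| = #|[set x | serves j H h x]|.
Proof.
move=> jNH hH h'H; have tj : tperm h h' j = j.
  by apply: tpermD; apply: contraNneq jNH => <-.
apply: (card_set_inj (inv_inj (transpose_nodesK h h'))) => x.
rewrite /serves -{1}tj stores_transpose.
by have := @helpers_transpose H h h' x h hH h'H; rewrite tpermL => ->.
Qed.

Lemma sum_card_serves j (H : {set 'I_n}) :
  (\sum_(h in H) #|[set x | serves j H h x]| <=
     dh * #|[set x | stores j x && (tag x j == ord0)]|)%N.
Proof.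
apply: leq_trans (_ : \sum_h #|[set x | serves j H h x]| <= _)%N.
  by rewrite [X in (_ <= X)%N](bigID (mem H)) /= leq_addr.
under eq_bigr => h _ do rewrite card_setE.
rewrite exchange_big card_setE big_distrr /=; apply: leq_sum => x _.
rewrite /serves; case: (stores j x); case: (tag x j == ord0) => /=; try by rewrite big1 ?muln0.
rewrite muln1 -card_setE (_ : [set h | h \in helpers H x] = helpers H x).
  by rewrite card_helpers geq_minl.
by apply/finset.setP => h; rewrite inE.
Qed.

(* All helpers of [H] are exchanged by transpositions fixing [j], so each serves the
   same number of layers: an equal [1/d] share of [dh] per tag-0 layer of [j]. *)
Lemma card_serves_le j (H : {set 'I_n}) h : #|H| = d -> j \notin H ->
  (d * s * #|[set x | serves j H h x]| <= dh * nslots)%N.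
Proof.
move=> cardH jNH; have [hH | hNH] := boolP (h \in H); last first.
  rewrite (_ : [set x | serves j H h x] = finset.set0) ?cards0 ?muln0 //.
  apply/finset.setP => x; rewrite !inE /serves; apply/negbTE/and3P => -[_ _ h_hs].
  by move: (fintype.subsetP (helpers_sub H x) h h_hs); rewrite inE (negbTE hNH) andbF.
have sum_eq : (\sum_(h' in H) #|[set x | serves j H h' x]| = d * #|[set x | serves j H h x]|)%N.
  rewrite (eq_bigr (fun=> #|[set x | serves j H h x]|)) => [|h' h'H].
    by rewrite sum_nat_const cardH.
  exact: card_serves_eq.
by rewrite -(card_tag0 j) [(d * s)%N]mulnC -mulnA -sum_eq mulnCA leq_mul2l sum_card_serves orbT.
Qed.

(* The stored file is the largest coset of the code (a fiber of [syndrome]), which spares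
   a proof that the parity checks are independent. *)
Definition Word := {ffun 'I_n * Layer -> F}.
Definition Unstored := {y : 'I_n * Layer | ~~ stores y.1 y.2}.
Definition Check := {c : Layer * 'I_r | #|nodes c.1| == w}.
Definition Syndrome := ({ffun Unstored -> F} * {ffun Check -> F})%type.
Definition syndrome (z : Word) : Syndrome :=
  ([ffun y : Unstored => z (val y)], [ffun c : Check => parity z (val c).1 (val c).2]).

Lemma codeword_subr (z z' : Word) : syndrome z = syndrome z' -> codeword (fun y => z y - z' y).
Proof.
move=> eq_syn; split=> [j x jNx | x t cardA lt_t].
  apply/eqP; rewrite subr_eq0; apply/eqP.
  have := congr1 (fun c : Syndrome => c.1 (Sub (j, x) jNx : Unstored)) eq_syn.
  by rewrite /= !ffunE.
have cardA' : #|nodes (x, Ordinal lt_t).1| == w by apply/eqP.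
have := congr1 (fun c : Syndrome => c.2 (Sub (x, Ordinal lt_t) cardA' : Check)) eq_syn.
rewrite /= !ffunE /= /parity => eq_par.
by under eq_bigr => l _ do rewrite mulrBr; rewrite sumrB eq_par subrr.
Qed.

Lemma card_Word : #|{: Word}| = (p ^ (n * #|{: Layer}|))%N.
Proof. by rewrite card_ffun card_Fp // card_prod card_ord. Qed.

Lemma card_Syndrome :
  #|{: Syndrome}| = (p ^ (n * #|{: Layer}| - n * nslots + r * nlayers))%N.
Proof.
rewrite card_prod !card_ffun card_Fp // -expnD; congr (_ ^ (_ + _))%N.
  rewrite card_sig -card_stores_pairs.
  have := cardC [set y : 'I_n * Layer | stores y.1 y.2]; rewrite card_prod card_ord => <-.
  by rewrite addKn; apply: eq_card => y; rewrite !inE.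
rewrite card_sig /nlayers mulnC.
have := cardsX [set x : Layer | #|nodes x| == w] [set: 'I_r]; rewrite cardsT card_ord => <-.
by apply: eq_card => -[x t]; rewrite !inE andbT.
Qed.

Lemma exists_big_syndrome_fiber :
  exists b, (p ^ (n * nslots) <= p ^ (r * nlayers) * #|[set z | syndrome z == b]|)%N.
Proof.
have [b big_b] := exists_big_fiber syndrome (syndrome 0).
exists b; move: big_b; rewrite card_Word card_Syndrome expnD -mulnA.
have nslots_le : (n * nslots <= n * #|{: Layer}|)%N.
  rewrite -card_stores_pairs; apply: leq_trans (max_card _) _.
  by rewrite card_prod card_ord.
by rewrite -{1}(subnK nslots_le) expnD leq_pmul2l // expn_gt0 prime_gt0.
Qed.

Section Fiber.
Variable b : Syndrome.

Definition fiber := [set z : Word | syndrome z == b].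
Local Notation m := #|fiber|.

(* Node [j] stores the layers through [j], indexed uniformly by those through [o0]. *)
Definition content (j : 'I_n) (z : Word) : {ffun Slot -> F} :=
  [ffun t => z (j, transpose_nodes o0 j (val t))].

Lemma card_content : #|{: {ffun Slot -> F}}| = (p ^ nslots)%N.
Proof. by rewrite card_ffun card_Fp. Qed.

Definition encode (j : 'I_n) (v : 'I_m) : 'I_(p ^ nslots) :=
  cast_ord card_content (enum_rank (content j (enum_val v))).
Definition decode (c : 'I_(p ^ nslots)) : {ffun Slot -> F} :=
  enum_val (cast_ord (esym card_content) c).

Lemma encodeK j v : decode (encode j v) = content j (enum_val v).
Proof. by rewrite /decode /encode cast_ordK enum_rankK. Qed.

Lemma codeword_fiber_subr (v v' : 'I_m) : codeword (fun y => enum_val v y - enum_val v' y).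
Proof.
apply: codeword_subr; have := enum_valP v; have := enum_valP v'.
by rewrite !inE => /eqP -> /eqP ->.
Qed.

Lemma eq_content j (z z' : Word) :
  content j z = content j z' <-> (forall x, stores j x -> z (j, x) = z' (j, x)).
Proof.
split=> [eq_zz' x jx | eq_zz']; last first.
  by apply/ffunP => t; rewrite !ffunE eq_zz' // stores_transpose0; apply: valP.
have jx' : stores o0 (transpose_nodes o0 j x).
  by rewrite -(stores_transpose0 j) transpose_nodesK.
have := congr1 (fun c : {ffun Slot -> F} => c (Sub _ jx')) eq_zz'.
by rewrite !ffunE /= transpose_nodesK.
Qed.

Definition read (h : 'I_n) (c : {ffun Slot -> F}) (x : Layer) : F :=
  oapp c 0 (insub (transpose_nodes o0 h x) : option Slot).

Lemma read_content h z x : stores h x -> read h (content h z) x = z (h, x).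
Proof.
move=> hx; have hx' : stores o0 (transpose_nodes o0 h x).
  by rewrite -(stores_transpose0 h) transpose_nodesK.
by rewrite /read insubT /= ffunE /= transpose_nodesK.
Qed.

Lemma encode_reconstruct (K : {set 'I_n}) : #|K| = k ->
  forall v v', (forall j, j \in K -> encode j v = encode j v') -> v = v'.
Proof.
move=> cardK v v' eq_enc; apply: enum_val_inj; apply/ffunP => -[j x].
have diff := codeword_fiber_subr v v'.
apply/eqP; rewrite -subr_eq0; apply/eqP.
apply: (codeword_eq0_of_k_nodes diff cardK) => {x} j' x j'K.
have [j'x | j'Nx] := boolP (stores j' x); last by case: diff => z_off _; apply: z_off.
have /eq_content eq_c : content j' (enum_val v) = content j' (enum_val v').
  by rewrite -!encodeK eq_enc.
by rewrite eq_c // subrr.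
Qed.

Definition msg_exp := ((dh * nslots) %/ (d * s))%N.

Lemma encode_repair (j : 'I_n) (H : {set 'I_n}) : #|H| = d -> j \notin H ->
  exists helper : 'I_n -> 'I_(p ^ nslots) -> 'I_(p ^ msg_exp),
    forall v v', (forall h, h \in H -> helper h (encode h v) = helper h (encode h v')) ->
    encode j v = encode j v'.
Proof.
move=> cardH jNH.
pose msg h (c : {ffun Slot -> F}) : {ffun {x | serves j H h x} -> F} :=
  [ffun q => \sum_(u : 'I_s) read h c (retag (val q) j u)].
have msg_small h : (#|{: {ffun {x | serves j H h x} -> F}}| <= p ^ msg_exp)%N.
  rewrite card_ffun card_Fp // leq_pexp2l ?prime_gt0 // card_sig /msg_exp.
  rewrite leq_divRL ?muln_gt0 ?andbT; last by apply: leq_trans k_le_d.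
  have -> : #|[pred x | serves j H h x]| = #|[set x | serves j H h x]|.
    by apply: eq_card => x; rewrite inE.
  by rewrite mulnC card_serves_le.
exists (fun h c => widen_ord (msg_small h) (enum_rank (msg h (decode c)))).
move=> v v' eq_msg; rewrite /encode; congr (cast_ord _ (enum_rank _)).
apply/eq_content => x jx; apply/eqP; rewrite -subr_eq0; apply/eqP.
apply: (repair_codeword (codeword_fiber_subr v v') cardH jNH) => h y hy.
have hH : h \in H.
  case/and3P: hy => _ _ /(fintype.subsetP (helpers_sub H y)); rewrite inE; by case/andP.
have := eq_msg h hH => /(congr1 val) /= /val_inj /enum_rank_inj; rewrite !encodeK.
move/(congr1 (fun c : {ffun {x | serves j H h x} -> F} => c (Sub y hy))); rewrite !ffunE /=.
case/and3P: hy => /andP [_ cardA] _ /(fintype.subsetP (helpers_sub H y)); rewrite inE.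
case/andP=> hA _; have stores_h u : stores h (retag y j u) by rewrite /stores /= hA cardA.
rewrite (eq_bigr _ (fun u _ => read_content (enum_val v) (stores_h u))).
rewrite (eq_bigr _ (fun u _ => read_content (enum_val v') (stores_h u))).
by rewrite sumrB => ->; rewrite subrr.
Qed.

Lemma fiber_exact_DSS : is_exact_DSS k d (p ^ msg_exp) encode.
Proof. by split; [apply: encode_reconstruct | apply: encode_repair]. Qed.

End Fiber.

Lemma nlayers_gt0 : (0 < nlayers)%N.
Proof.
have [A] : exists A : {set 'I_n}, A \in [set A : {set 'I_n} | #|A| == w].
  by apply/card_gt0P; rewrite card_draws card_ord bin_gt0; lia.
by rewrite inE => cardA; apply/card_gt0P; exists ((A, [ffun=> ord0]), 1%g); rewrite inE.
Qed.

Lemma nslots_gt0 : (0 < nslots)%N.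
Proof.
have : (0 < n * nslots)%N by rewrite nslots_balance muln_gt0 nlayers_gt0 andbT; lia.
by rewrite muln_gt0 => /andP [].
Qed.

Lemma layered_code_exists : exists (m t a e : nat) (stor : 'I_n -> 'I_m -> 'I_(p ^ a)),
  [/\ is_exact_DSS k d (p ^ t) stor, (0 < a)%N, (p ^ e <= m)%N,
      (n * i * a = w * e)%N & (d * t * s <= dh * a)%N].
Proof.
have [b big_b] := exists_big_syndrome_fiber.
have balance := nslots_balance.
exists #|fiber b|, msg_exp, nslots, (n * nslots - r * nlayers)%N, (@encode b).
split; [exact: fiber_exact_DSS | exact: nslots_gt0 | | nia | ].
- have le_r : (r * nlayers <= n * nslots)%N by rewrite balance leq_mul2r leq_addr orbT.
  move: big_b; rewrite -{1}(subnKC le_r) expnD leq_pmul2l //.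
  by rewrite expn_gt0 prime_gt0.
- by rewrite mulnAC mulnC leq_trunc_div.
Qed.

End LayeredCode.

Section Rates.
Variables (R : realType) (alpha : R) (p a : nat).
Hypotheses (alpha_gt0 : 0 < alpha) (p_gt1 : (1 < p)%N) (a_gt0 : (0 < a)%N).
Local Notation u := (a%:R * ln (p%:R : R) / alpha).

Lemma ln_p_gt0 : 0 < ln (p%:R : R).
Proof. by rewrite ln_gt0 // ltr1n. Qed.

Lemma ln_natX e : ln ((p ^ e)%:R : R) = e%:R * ln (p%:R : R).
Proof. by rewrite natrX lnXn ?ltr0n 1?ltnW // mulr_natl. Qed.

Lemma unit_gt0 : 0 < u.
Proof. by rewrite divr_gt0 // mulr_gt0 ?ln_p_gt0 // ltr0n. Qed.

Lemma node_size_rate : ln ((p ^ a)%:R : R) <= alpha * u.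
Proof. by rewrite ln_natX [X in _ <= X]mulrC divfK ?lt0r_neq0. Qed.

Lemma bandwidth_rate (d t h s : nat) : (0 < s)%N -> (d * t * s <= h * a)%N ->
  d%:R * ln ((p ^ t)%:R : R) <= h%:R * alpha / s%:R * u.
Proof.
move=> s_gt0 le_dts; have sR : 0 < s%:R :> R by rewrite ltr0n.
have -> : h%:R * alpha / s%:R * u = (h * a)%:R / s%:R * ln (p%:R : R).
  by rewrite natrM; field; rewrite !lt0r_neq0.
rewrite ln_natX mulrA -natrM; apply: ler_wpM2r; first exact/ltW/ln_p_gt0.
by rewrite ler_pdivlMr // -natrM ler_nat.
Qed.

Lemma file_size_rate (m e N w : nat) : (p ^ e <= m)%N -> (N * a = w * e)%N -> (0 < w)%N ->
  N%:R * alpha / w%:R <= ln (m%:R : R) / u.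
Proof.
move=> le_m eq_Na w_gt0.
have pe_gt0 : (0 < p ^ e)%N by rewrite expn_gt0 ltnW.
have ln_m : e%:R * ln (p%:R : R) <= ln (m%:R : R).
  by rewrite -ln_natX ler_ln ?posrE ?ltr0n ?ler_nat // (leq_trans pe_gt0).
have -> : N%:R * alpha / w%:R = e%:R * ln (p%:R : R) / u.
  have aR : a%:R != 0 :> R by rewrite pnatr_eq0 -lt0n.
  rewrite -[N%:R](mulfK aR) -natrM eq_Na natrM.
  by field; rewrite ?lt0r_neq0 ?ln_p_gt0 ?ltr0n.
by apply: ler_wpM2r; rewrite // ltW // invr_gt0 unit_gt0.
Qed.

End Rates.

Theorem theorem3p2 (R : realType) (n k d i : nat) (alpha : R) :
  (1 <= k)%N -> (k <= d)%N -> (d < n)%N -> 0 < alpha ->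
  (1 <= i)%N -> (i <= k)%N ->
  (((n * i)%:R * alpha / (n - k + i)%:R)%:E <=
   C_exact n k d alpha ((d - k + i)%:R * alpha / (d - k + 1)%:R))%E.
Proof.
move=> k_gt0 k_le_d d_lt_n alpha_gt0 i_gt0 i_le_k.
have [p ns_lt_p p_prime] := prime_above (n * (d - k).+1).
have o0 : 'I_n := Ordinal (leq_ltn_trans (leq0n d) d_lt_n).
have [m [t [a [e [stor [dss a_gt0 e_le_m eq_rate le_bw]]]]]] :=
  layered_code_exists o0 k_gt0 k_le_d d_lt_n i_gt0 i_le_k p_prime ns_lt_p.
have p_gt1 := prime_gt1 p_prime.
apply: le_trans (ereal_sup_ubound _); last first.
  exists m, (p ^ a)%N, (p ^ t)%N, (a%:R * ln (p%:R : R) / alpha), stor.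
  split; first exact: unit_gt0.
  split; first exact: dss.
  split; first exact: node_size_rate.
  by split=> //; apply: bandwidth_rate; rewrite ?addn1.
by rewrite lee_fin; apply: file_size_rate e_le_m eq_rate _; lia.
Qed.
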